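(* Let $p>1$. A scheduling policy $\eta$ is a $p$-approximation policy if it schedules jobs solely based on the requirements $[q^*_X]$ and the state $[d_X(k) : X\in S]$ of the system, and, for every frame $k$, $$\sum_{X\in S}\tilde q_X(k)\,d_X(k)\ \ge\ \frac{1}{p}\ \max_{[q_X]\text{ feasible}}\ \sum_{X\in S} q_X\, d_X(k).$$
   Context: A system consists of a finite set $S$ of tasks. Time is slotted, $t\in\{0,1,2,\dots\}$. Each task $X\in S$ has a period $\tau_X$ (a positive integer); time is partitioned into consecutive periods of $X$ of $\tau_X$ slots each, the first starting at $t=0$, and in each period $X$ has one job, removed at the end of the period. Let $T=\mathrm{lcm}\{\tau_X : X\in S\}$; time is partitioned into consecutive frames of $T$ slots each, the $k$-th frame ($k=1,2,\dots$) being the $k$-th such block starting from $t=0$. A scheduling policy (possibly randomized) chooses in each slot either to idle or to execute the job of exactly one task. Each task $X$ has rewards $r^1_X\ge r^2_X\ge\dots\ge r^{\tau_X}_X\ge 0$: executing the job of $X$ for the $i$-th time within a period yields reward $r^i_X$ to $X$. Let $s_X(t)$ be the total reward obtained by $X$ between time 0 and $t$; the average reward is $q_X=\liminf_{t\to\infty}s_X(t)/(t/T)$. Each task has a minimum requirement $q^*_X>0$; a policy fulfills the system if $q_X\ge q^*_X$ with probability 1 for all $X\in S$. The system (with requirements $[q^*_X]$) is feasible if some policy fulfills it, and strictly feasible if there is $\epsilon>0$ such that the same system with requirements $[(1+\epsilon)q^*_X]$ is feasible. A vector $[q_X : X\in S]$ is called feasible if the system with the same tasks, periods and rewards and requirements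 $[q_X]$ is feasible. For $p\ge 1$, a policy is a $p$-approximation policy if it fulfills every system with requirements $[q^*_X]$ such that the same system with requirements $[p\,q^*_X]$ is strictly feasible. Let $\tilde q_X(k)$ be the total reward obtained by $X$ during the $k$-th frame. The debt of $X$ is $d_X(0)=0$, $d_X(k)=[d_X(k-1)+q^*_X-\tilde q_X(k)]^+$ for $k>0$, with $[x]^+=\max\{x,0\}$; the state of the system at frame $k$ is $[d_X(k) : X\in S]$. *)

From HB Require Import structures.
From mathcomp Require Import all_boot all_order all_algebra.
From mathcomp Require Import all_classical all_reals all_analysis.
Set Implicit Arguments. Unset Strict Implicit. Unset Printing Implicit Defensive.
Import Order.TTheory GRing.Theory Num.Theory.
Local Open Scope ring_scope.

Section Sched.
Variables (R : realType) (S : finType) (tau : S -> nat) (r : S -> nat -> R).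
(* tau X = period of X (assumed > 0 in the theorem);
   r X i = reward for the i-th execution (i = 1 .. tau X) of X within a period. *)

Definition frameT : nat := \big[lcmn/1%N]_(X : S) tau X.

(* an action sequence: in slot t, idle (None) or execute the job of X (Some X) *)
Definition actseq := nat -> option S.

Definition exec_count (a : actseq) (X : S) (t : nat) : nat :=
  \sum_((t %/ tau X) * tau X <= t' < t.+1) (a t' == Some X : nat).

Definition slot_rew (a : actseq) (X : S) (t : nat) : R :=
  if a t == Some X then r X (exec_count a X t) else 0.

Definition cum_rew (a : actseq) (X : S) (t : nat) : R :=
  \sum_(0 <= t' < t) slot_rew a X t'.

Definition avg_rew (a : actseq) (X : S) : \bar R :=
  limn_einf (fun t : nat => (cum_rew a X t / (t%:R / (frameT%:R)))%:E).

Definition meets_req (a : actseq) (q : S -> R) : Prop :=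
  forall X : S, ((q X)%:E <= avg_rew a X)%E.

(* The system with requirements q is feasible: some (possibly randomized)
   policy fulfills it with probability 1.  A randomized policy is modelled as a
   random action sequence on an arbitrary probability space (the system itself
   is deterministic, so any action sequence is implementable). *)
Definition sys_feasible (q : S -> R) : Prop :=
  exists (d : measure_display) (Om : measurableType d) (P : probability Om R)
         (pol : Om -> actseq),
    {ae P, forall w, meets_req (pol w) q}.

Definition sys_strictly_feasible (q : S -> R) : Prop :=
  exists eps : R, 0 < eps /\ sys_feasible (fun X => (1 + eps) * q X).

(* reward of X during the k-th frame (k >= 1): slots (k-1)T .. kT-1 *)
Definition frame_rew (a : actseq) (X : S) (k : nat) : R :=
  \sum_((k.-1 * frameT)%N <= t < (k * frameT)%N) slot_rew a X t.

(* A state-based randomized policy: in each frame the schedule of the frame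
   (a map from slot offsets 0..T-1 to actions) is chosen as a function of the
   requirements, the current state (debts) and a fresh random seed u : U. *)
Definition sb_policy (U : Type) := (S -> R) -> (S -> R) -> U -> (nat -> option S).

Section Traj.
Variables (U : Type) (eta : sb_policy U) (q : S -> R) (seed : nat -> U).

(* actions generated when the debt at the start of frame k+1 is D k *)
Definition act_of (D : nat -> S -> R) : actseq :=
  fun t => eta q (D (t %/ frameT)%N) (seed (t %/ frameT)%N) (t %% frameT)%N.

(* debts d_X(k): d(0) = 0, d(k) = [d(k-1) + q_X - qtilde_X(k)]^+.
   The reward of frame k.+1 only depends on the actions of that frame
   (periods divide T), which are determined by d(k). *)
Fixpoint debt (k : nat) : S -> R :=
  match k with
  | 0 => fun _ => 0
  | k'.+1 => fun X =>
      Num.max (debt k' X + q X - frame_rew (act_of (fun _ => debt k')) X k) 0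
  end.

Definition traj : actseq := act_of debt.

End Traj.
End Sched.

From HB Require Import structures.
From mathcomp Require Import all_boot all_order all_algebra.
From mathcomp Require Import all_classical all_reals all_analysis.
From mathcomp Require Import ring lra.
Import Order.TTheory GRing.Theory Num.Theory.
Set Implicit Arguments. Unset Strict Implicit.
Local Open Scope ring_scope.

(* Fix a realization of the seeds; everything is then
   deterministic.  Strict feasibility of [p q*] provides eps > 0 such that
   [(1 + eps) p q*] is feasible, so the approximation property gives
   [sum_X qtilde_X(k) d_X(k) >= (1 + eps) sum_X q*_X d_X(k)] in every frame.
   For the Lyapunov function [L(k) = sum_X d_X(k)^2] this yields the drift
   bound [L(k+1) <= L(k) - 2 eps sum_X q*_X d_X(k) + C], so [L] never exceeds
   a constant and the debts stay bounded by some [M].  Unrolling the debt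
   recursion, the reward of [X] during the first [n] frames is at least
   [n q*_X - M], hence its average reward is at least [q*_X]. *)

Lemma ler_sum_term (R : numDomainType) (I : finType) (F : I -> R) (i : I) :
  (forall j, 0 <= F j) -> F i <= \sum_j F j.
Proof. by move=> F_ge0; rewrite (bigD1 i) //= lerDl sumr_ge0. Qed.

Lemma le_limn_einf (R : realType) (u : nat -> R) (x : R) :
  (forall e : R, 0 < e -> exists N, forall n, (N <= n)%N -> x - e <= u n) ->
  (x%:E <= limn_einf (fun n => (u n)%:E))%E.
Proof.
move=> ev_ge; rewrite limn_einf_lim (cvg_lim _ (@cvg_einfs_sup _ _)) //.
apply/lee_subgt0Pr => e e_gt0; have [N uN] := ev_ge e e_gt0.
apply: (le_trans _ (ereal_sup_ubound _)); last by exists N.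
by apply: le_ereal_inf_tmp => _ [m /= Nm <-]; rewrite -EFinD lee_fin; apply: uN.
Qed.

Section Rewards.
Variables (R : realType) (S : finType) (tau : S -> nat) (r : S -> nat -> R).
Hypothesis tau_gt0 : forall X, (0 < tau X)%N.
Hypothesis r_nonincr : forall X i j, (1 <= i)%N -> (i <= j)%N -> (j <= tau X)%N ->
  r X j <= r X i.
Hypothesis r_ge0 : forall X i, (1 <= i)%N -> (i <= tau X)%N -> 0 <= r X i.

Local Notation T := (frameT tau).

Lemma frameT_gt0 : (0 < T)%N.
Proof.
apply: (big_ind (fun n => 0 < n)%N) => // m n m_gt0 n_gt0.
by rewrite lcmn_gt0 m_gt0 n_gt0.
Qed.

Lemma dvdn_frameT X : (tau X %| T)%N.
Proof. exact: biglcmn_sup. Qed.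

Lemma exec_count_range a X t : a t = Some X ->
  (1 <= exec_count tau a X t <= tau X)%N.
Proof.
move=> atX; rewrite /exec_count; apply/andP; split.
  by rewrite big_nat_recr ?leq_divM //= atX eqxx addn1.
apply: (@leq_trans (\sum_(t %/ tau X * tau X <= t' < t.+1) 1)%N).
  by apply: leq_sum => i _; case: (_ == _).
rewrite sum_nat_const_nat muln1 {1}(divn_eq t (tau X)) -addnS addKn.
exact: ltn_pmod.
Qed.

Lemma slot_rew_ge0 a X t : 0 <= slot_rew tau r a X t.
Proof.
rewrite /slot_rew; case: eqP => // /exec_count_range /andP[? ?].
exact: r_ge0.
Qed.

Lemma slot_rew_le a X t : slot_rew tau r a X t <= r X 1%N.
Proof.
rewrite /slot_rew; case: eqP => [/exec_count_range /andP[? ?]|_].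
  exact: r_nonincr.
exact: r_ge0.
Qed.

Lemma frame_rew_ge0 a X k : 0 <= frame_rew tau r a X k.
Proof. by apply: sumr_ge0 => t _; apply: slot_rew_ge0. Qed.

Lemma frame_rew_le a X k : frame_rew tau r a X k.+1 <= T%:R * r X 1%N.
Proof.
apply: (le_trans (ler_sum _ (fun t _ => slot_rew_le a X t))).
by rewrite sumr_const_nat mulSn addnK mulr_natl.
Qed.

Lemma cum_rew_frames a X n :
  cum_rew tau r a X (n * T) = \sum_(k < n) frame_rew tau r a X k.+1.
Proof.
elim: n => [|n IHn]; first by rewrite big_ord0 /cum_rew mul0n big_geq.
rewrite big_ord_recr /= -IHn /cum_rew /frame_rew /=.
by rewrite (big_cat_nat _ (n := (n * T)%N)) //= leq_mul2r leqnSn orbT.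
Qed.

Lemma le_cum_rew a X t t' : (t <= t')%N -> cum_rew tau r a X t <= cum_rew tau r a X t'.
Proof.
move=> le_tt'; rewrite /cum_rew [leRHS](big_cat_nat _ (n := t)) //= lerDl.
by apply: sumr_ge0 => i _; apply: slot_rew_ge0.
Qed.

Lemma eq_slot_rew a b X t :
  (forall t', (t %/ tau X * tau X <= t' <= t)%N -> a t' = b t') ->
  slot_rew tau r a X t = slot_rew tau r b X t.
Proof.
move=> eq_ab; rewrite /slot_rew /exec_count eq_ab ?leq_divM ?leqnn //.
by congr (if _ then r X _ else _); apply: eq_big_nat => i /eq_ab ->.
Qed.

(* Since the periods divide [T], no period straddles two frames, so frame
   [k+1] of the trajectory is the schedule chosen at state [d(k)]. *)
Lemma frame_rew_traj U (eta : sb_policy R S U) q seed k X :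
  frame_rew tau r (traj tau r eta q seed) X k.+1 =
  frame_rew tau r (act_of tau eta q seed (fun _ => debt tau r eta q seed k)) X k.+1.
Proof.
apply: eq_big_nat => t /andP[kT_le_t t_lt]; apply: eq_slot_rew => t' /andP[le_t' t'_le].
have frame_t' : (t' %/ T)%N = k.
  apply/eqP; rewrite eqn_leq -ltnS ltn_divLR ?frameT_gt0 // leq_divRL ?frameT_gt0 //.
  rewrite (leq_ltn_trans t'_le t_lt) /=; apply: leq_trans le_t'.
  rewrite -(divnK (dvdn_mull k (dvdn_frameT X))) leq_mul2r.
  by rewrite leq_div2r ?orbT.
by rewrite /traj /act_of frame_t'.
Qed.

Lemma le_avg_rew a X (q M : R) : 0 < q -> 0 <= M ->
  (forall n, n%:R * q - M <= cum_rew tau r a X (n * T)) ->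
  (q%:E <= avg_rew tau r a X)%E.
Proof.
move=> q_gt0 M_ge0 cum_ge; apply: le_limn_einf => e e_gt0.
set K : R := T%:R; have K_gt0 : 0 < K by rewrite ltr0n frameT_gt0.
set c := (q + M) * K.
have ce_ge0 : 0 <= c / e.
  by rewrite divr_ge0 ?mulr_ge0 ?addr_ge0 // ltW.
exists (Num.Def.archi_bound (c / e)).+1 => t lt_bound_t.
have ce_lt_t : c / e < t%:R.
  by rewrite (lt_le_trans (archi_boundP ce_ge0)) // ler_nat ltnW.
have t_gt0 : 0 < t%:R :> R by apply: le_lt_trans ce_lt_t.
have c_le_et : c <= e * t%:R by rewrite mulrC -ler_pdivrMr // ltW.
set n := (t %/ T)%N.
have t_lt : t%:R < (n%:R + 1) * K.
  rewrite natr1 -natrM ltr_nat mulSnr {1}(divn_eq t T) ltn_add2l.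
  by rewrite ltn_pmod ?frameT_gt0.
have cum_n := le_trans (cum_ge n) (le_cum_rew a X (leq_divM t T)).
have -> : cum_rew tau r a X t / (t%:R / K) = cum_rew tau r a X t * K / t%:R.
  by field; rewrite !gt_eqF.
rewrite ler_pdivlMr //.
have : (n%:R * q - M) * K <= cum_rew tau r a X t * K by rewrite ler_pM2r.
rewrite /c in c_le_et; nra.
Qed.

End Rewards.

Section DebtQueue.
Variables (R : realType) (S : finType) (q : S -> R) (qt d : nat -> S -> R).
Hypothesis debt0 : forall X, d 0%N X = 0.
Hypothesis debtS : forall k X, d k.+1 X = Num.max (d k X + q X - qt k X) 0.

Lemma debt_ge0 k X : 0 <= d k X.
Proof. by case: k => [|k]; rewrite ?debt0 // debtS le_max lexx orbT. Qed.

Lemma debt_telescope k X : k%:R * q X - d k X <= \sum_(j < k) qt j X.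
Proof.
elim: k => [|k IHk]; first by rewrite big_ord0 debt0 mul0r subr0.
rewrite big_ord_recr /= -natr1 debtS.
have : d k X + q X - qt k X <= Num.max (d k X + q X - qt k X) 0 by rewrite le_max lexx.
move: (IHk); lra.
Qed.

Variables (B : S -> R) (eps : R).
Hypothesis q_gt0 : forall X, 0 < q X.
Hypothesis qt_ge0 : forall k X, 0 <= qt k X.
Hypothesis qt_le : forall k X, qt k X <= B X.
Hypothesis eps_gt0 : 0 < eps.
Hypothesis debt_drift :
  forall k, \sum_X (1 + eps) * q X * d k X <= \sum_X qt k X * d k X.

Let L k := \sum_X d k X ^+ 2.
Let C := \sum_X (q X + B X) ^+ 2.

Lemma sqr_debtS_le k X :
  d k.+1 X ^+ 2 <= d k X ^+ 2 + 2 * (q X * d k X) - 2 * (qt k X * d k X)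
                   + (q X + B X) ^+ 2.
Proof.
rewrite debtS.
have max_sqr : Num.max (d k X + q X - qt k X) 0 ^+ 2 <= (d k X + q X - qt k X) ^+ 2.
  by case: (lerP 0 (d k X + q X - qt k X)); rewrite ?expr0n ?sqr_ge0.
apply: (le_trans max_sqr).
have := q_gt0 X; have := qt_ge0 k X; have := qt_le k X; have := debt_ge0 k X.
nra.
Qed.

Lemma debt_lyapunov_drift k : L k.+1 <= L k - 2 * eps * \sum_X q X * d k X + C.
Proof.
apply: (le_trans (ler_sum _ (fun X _ => sqr_debtS_le k X))).
rewrite !big_split /= sumrN -!mulr_sumr.
have drift := debt_drift k.
rewrite (eq_bigr (fun X => (1 + eps) * (q X * d k X))) in drift; last first.
  by move=> X _; rewrite mulrA.
rewrite -mulr_sumr in drift; rewrite /L /C; lra.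
Qed.

(* Above the threshold [sum_X q X d X = C / (2 eps)] the drift is negative,
   and below it each debt is at most [C / (2 eps q X)]. *)
Lemma debt_lyapunov_bounded k : L k <= \sum_X (C / (2 * eps * q X)) ^+ 2 + C.
Proof.
have C_ge0 : 0 <= C by apply: sumr_ge0 => X _; apply: sqr_ge0.
elim: k => [|k IHk].
  rewrite /L big1 => [|X _]; last by rewrite debt0 expr0n.
  by rewrite addr_ge0 // sumr_ge0 // => X _; apply: sqr_ge0.
set A := \sum_X q X * d k X.
have A_ge0 : 0 <= A by apply: sumr_ge0 => X _; rewrite mulr_ge0 ?debt_ge0 // ltW.
have drift := debt_lyapunov_drift k; rewrite -/A in drift.
have [C_le|A_lt] := lerP (C / (2 * eps)) A.
  have : C <= 2 * eps * A by rewrite -ler_pdivrMl ?mulr_gt0 // mulrC.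
  lra.
have Lk_le : L k <= \sum_X (C / (2 * eps * q X)) ^+ 2.
  apply: ler_sum => X _.
  have dX_le : d k X <= C / (2 * eps * q X).
    have qdX_le : q X * d k X <= A.
      rewrite /A; apply: (@ler_sum_term _ _ (fun Y => q Y * d k Y) X) => Y.
      by rewrite mulr_ge0 ?debt_ge0 // ltW.
    by rewrite invfM mulrA ler_pdivlMr // mulrC (le_trans qdX_le) // ltW.
  by rewrite !expr2 ler_pM ?debt_ge0.
have : 0 <= eps * A by rewrite mulr_ge0 // ltW.
lra.
Qed.

Lemma debt_bounded : exists M, 0 <= M /\ forall k X, d k X <= M.
Proof.
set L0 := \sum_X (C / (2 * eps * q X)) ^+ 2 + C.
exists (1 + L0); split.
  by rewrite !addr_ge0 ?sumr_ge0 // => X _; apply: sqr_ge0.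
move=> k X; have := debt_lyapunov_bounded k.
have : d k X ^+ 2 <= L k.
  by apply: (@ler_sum_term _ _ (fun Y => d k Y ^+ 2) X) => Y; apply: sqr_ge0.
have := debt_ge0 k X; rewrite -/L0; nra.
Qed.

End DebtQueue.

Lemma approx_weighted_le (R : realType) (S : finType) (F : set (S -> R))
    (d qt q : S -> R) (p eps : R) :
  0 < p -> F (fun X => (1 + eps) * (p * q X)) ->
  ((p^-1)%:E * ereal_sup [set (\sum_X f X * d X)%:E | f in F]
    <= (\sum_X qt X * d X)%:E)%E ->
  \sum_X (1 + eps) * q X * d X <= \sum_X qt X * d X.
Proof.
move=> p_gt0 Fq approx.
have sup_ge : ((\sum_X (1 + eps) * (p * q X) * d X)%:E
               <= ereal_sup [set (\sum_X f X * d X)%:E | f in F])%E.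
  by apply: ereal_sup_ubound; exists (fun X => (1 + eps) * (p * q X)).
have pV_ge0 : (0 <= (p^-1)%:E)%E by rewrite lee_fin invr_ge0 ltW.
have := le_trans (lee_wpmul2l pV_ge0 sup_ge) approx.
rewrite -EFinM lee_fin mulr_sumr; apply: le_trans; apply: ler_sum => X _.
by rewrite [leRHS](_ : _ = (1 + eps) * q X * d X) //; field; rewrite gt_eqF.
Qed.

Theorem theorem6 (R : realType) (S : finType) (tau : S -> nat) (r : S -> nat -> R)
    (p : R) (U : Type) (dU : measure_display) (Om : measurableType dU)
    (P : probability Om R) (seed : Om -> nat -> U) (eta : sb_policy R S U) :
  (forall X : S, (0 < tau X)%N) ->
  (forall X : S, forall i j : nat, (1 <= i)%N -> (i <= j)%N -> (j <= tau X)%N ->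
       r X j <= r X i) ->
  (forall X : S, forall i : nat, (1 <= i)%N -> (i <= tau X)%N -> 0 <= r X i) ->
  1 < p ->
  (* frame [k+1] is scheduled at state [d(k)] *)
  (forall (qs : S -> R) (w : Om) (k : nat), (forall X, 0 < qs X) ->
     let d := debt tau r eta qs (seed w) k in
     ((p^-1)%:E * ereal_sup [set (\sum_(X : S) q X * d X)%:E | q in sys_feasible tau r]
       <= (\sum_(X : S) frame_rew tau r (traj tau r eta qs (seed w)) X k.+1 * d X)%:E)%E) ->
  forall qs : S -> R, (forall X, 0 < qs X) ->
    sys_strictly_feasible tau r (fun X => p * qs X) ->
    {ae P, forall w, meets_req tau r (traj tau r eta qs (seed w)) qs}.
Proof.
move=> tau_gt0 r_nonincr r_ge0 p_gt1 approx q q_gt0 [eps [eps_gt0 feas]].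
apply: aeW => w X.
pose d := debt tau r eta q (seed w).
pose qt k Y := frame_rew tau r (traj tau r eta q (seed w)) Y k.+1.
have debtS k Y : d k.+1 Y = Num.max (d k Y + q Y - qt k Y) 0.
  by rewrite /qt frame_rew_traj.
have drift k : \sum_Y (1 + eps) * q Y * d k Y <= \sum_Y qt k Y * d k Y.
  by apply: approx_weighted_le (lt_trans ltr01 p_gt1) feas (approx q w k q_gt0).
have [M [M_ge0 d_le]] := debt_bounded (fun _ => erefl) debtS q_gt0
  (fun k Y => frame_rew_ge0 tau_gt0 r_ge0 _ Y k.+1)
  (fun k Y => frame_rew_le tau_gt0 r_nonincr r_ge0 _ Y k) eps_gt0 drift.
apply: (le_avg_rew tau_gt0 r_ge0 (q_gt0 X) M_ge0) => n.
rewrite cum_rew_frames (le_trans _ (debt_telescope (fun _ => erefl) debtS n X)) //.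
by rewrite lerD2l lerN2.
Qed.
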